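(* Let $G$ be a finite (unsigned) graph. Write its chromatic symmetric function $X_G$ as a polynomial with rational coefficients in $\{\zeta_n : n\ge1\}$. Then for every $k\ge 0$, the number of acyclic orientations of $G$ with exactly $k$ sinks equals the sum of the coefficients of those monomials for which the sum of the indices $n$ of its $\zeta_n$ factors (counted with multiplicity) equals $k$.
   Context: For a finite graph $G$ with vertices $v_1,\dots,v_n$, a proper coloring is a map $\kappa:V(G)\to\{1,2,3,\dots\}$ with $\kappa(u)\ne\kappa(v)$ whenever $u,v$ are joined by an edge, and $X_G=\sum_{\kappa\text{ proper}}x_{\kappa(v_1)}\cdots x_{\kappa(v_n)}$ in commuting variables $x_1,x_2,\dots$. A sink of an orientation is a vertex with no outgoing edges. Notation: $p_a=\sum_{i\ge1}x_i^a$ and $\zeta_n=\sum_{a=1}^n\binom{n}{a}p_a$ for $n\ge1$ (equivalently $p_n=\sum_{i=1}^n\binom{n}{i}(-1)^{n-i}\zeta_i$). *)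

From HB Require Import structures.
From mathcomp Require Import all_boot all_order all_algebra.
From mathcomp Require Import mpoly.
Set Implicit Arguments. Unset Strict Implicit. Unset Printing Implicit Defensive.
Import Order.TTheory GRing.Theory Num.Theory.
Local Open Scope ring_scope.

Definition simple_graph (T : finType) (e : rel T) : Prop :=
  ssrbool.symmetric e /\ irreflexive e.

(* Proper colorings with colours 1..N are modelled by maps V -> 'I_N. *)
Definition proper_coloring (T : finType) (e : rel T) (N : nat)
  (kappa : {ffun T -> 'I_N}) : bool :=
  [forall u, forall v, e u v ==> (kappa u != kappa v)].

(* X_G restricted to the first N variables x_1..x_N (x_{i+1} is 'X_i). *)
Definition chromsym (T : finType) (e : rel T) (N : nat) : {mpoly rat[N]} :=
  \sum_(kappa : {ffun T -> 'I_N} | proper_coloring e kappa)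
     \prod_(v : T) 'X_(kappa v).

Definition psum (N a : nat) : {mpoly rat[N]} := \sum_(i < N) 'X_i ^+ a.

Definition zeta (N n : nat) : {mpoly rat[N]} :=
  \sum_(1 <= a < n.+1) ('C(n, a))%:R *: psum N a.

(* Evaluate Q in Q[z_1..z_M] at z_j := zeta_j (variable 'X_j of Q stands for
   zeta_{j+1}), in N variables. *)
Definition eval_zeta (M N : nat) (Q : {mpoly rat[M]}) : {mpoly rat[N]} :=
  mmap (fun c : rat => c%:MP) (fun j : 'I_M => zeta N j.+1) Q.

(* Q(zeta_1,...,zeta_M) = X_G as symmetric functions, i.e. in every finite
   number N of variables. *)
Definition represents_chromsym (T : finType) (e : rel T) (M : nat)
  (Q : {mpoly rat[M]}) : Prop :=
  forall N : nat, eval_zeta N Q = chromsym e N.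

Definition zeta_weight (M : nat) (m : 'X_{1..M}) : nat :=
  (\sum_(j < M) j.+1 * m j)%N.

Definition coef_sum_weight (M : nat) (Q : {mpoly rat[M]}) (k : nat) : rat :=
  \sum_(m <- msupp Q | zeta_weight m == k) Q@_m.

Definition orientation (T : finType) (e : rel T) (D : {set T * T}) : bool :=
  [forall x, forall y, (((x, y) \in D) ==> e x y) &&
                        (e x y ==> (((x, y) \in D) != ((y, x) \in D)))].

Definition arc_rel (T : finType) (D : {set T * T}) : rel T :=
  fun x y => (x, y) \in D.

Definition acyclic_orientation (T : finType) (e : rel T) (D : {set T * T}) : bool :=
  orientation e D &&
  [forall x, forall y, ((x, y) \in D) ==> ~~ connect (arc_rel D) y x].

Definition sinks (T : finType) (D : {set T * T}) : {set T} :=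
  [set v | [forall w, (v, w) \notin D]].

Definition num_acyclic_sinks (T : finType) (e : rel T) (k : nat) : nat :=
  #|[set D : {set T * T} | acyclic_orientation e D & #|sinks D| == k]|.

(* Specialise X_G to x_1 = t - 1 and x_2 = ... = x_(m+1) = -1.  Then zeta_j becomes
   t^j - 1 - m, so Q(zeta) is a polynomial G(m) in m, while sorting the colourings by the
   stable set S of vertices of colour 1 gives sum_S (t-1)^|S| (-1)^(n-|S|) chi_(G-S)(m).
   Both sides are polynomials in m, so they also agree at m = -1.  There G(-1) = Q(t, t^2, ...),
   whose coefficient of t^k is the weighted coefficient sum, and Stanley's
   chi_H(-1) = (-1)^|H| a(H) (obtained from chi_H(m+1) = sum_S chi_(H-S)(m) over the top colour
   class) turns the other side into sum_S (t-1)^|S| a(G-S) = sum_D t^#sinks(D): expand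
   t^#sinks as a sum of (t-1)^|S| over sets S of sinks, and note that removing a stable set S
   of sinks leaves an arbitrary acyclic orientation of G - S.
   Such a Q exists by X_G = sum_(F subset E) (-1)^|F| prod_(components C of F) p_|C|
   and p_c = sum_a binom(c,a) (-1)^(c-a) zeta_a. *)

From HB Require Import structures.
From mathcomp Require Import all_boot all_order all_algebra.
From mathcomp Require Import mpoly.
From mathcomp Require Import ring zify.
Set Implicit Arguments. Unset Strict Implicit. Unset Printing Implicit Defensive.
Import Order.TTheory GRing.Theory Num.Theory.
Local Open Scope ring_scope.

Section PolyCharZero.
Variable R : numFieldType.
Implicit Types (p q r : {poly R}).

Lemma poly_eq0_nat q : (forall n : nat, q.[n%:R] = 0) -> q = 0.
Proof.
move=> q0; apply: (@roots_geq_poly_eq0 _ q [seq i%:R | i <- iota 0 (size q)]).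
- by apply/allP => x /mapP [i _ ->]; apply/rootP.
- by rewrite map_inj_uniq ?iota_uniq // => i j /eqP; rewrite eqr_nat => /eqP.
- by rewrite size_map size_iota.
Qed.

Lemma poly_eq_nat p q : (forall n : nat, p.[n%:R] = q.[n%:R]) -> p = q.
Proof.
move=> pq; apply/eqP; rewrite -subr_eq0; apply/eqP/poly_eq0_nat => n.
by rewrite hornerD hornerN pq subrr.
Qed.

Lemma antidifferenceXn d : exists P : {poly R}, forall x, P.[x + 1] - P.[x] = x ^+ d.
Proof.
elim/ltn_ind: d => d IH.
have /fin_all_exists [P PE] : forall i : 'I_d, exists P : {poly R},
  forall x, P.[x + 1] - P.[x] = x ^+ i by move=> i; apply: IH.
pose S := \sum_(i < d) 'C(d.+1, i)%:R *: P i.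
exists (d.+1%:R^-1 *: ('X^(d.+1) - S)) => x.
have SE : S.[x + 1] - S.[x] = \sum_(i < d) x ^+ i *+ 'C(d.+1, i).
  rewrite !horner_sum -sumrB; apply: eq_bigr => i _.
  by rewrite !hornerZ -mulrBr PE mulr_natl.
have XE : (x + 1) ^+ d.+1 - x ^+ d.+1 = \sum_(i < d) x ^+ i *+ 'C(d.+1, i) + d.+1%:R * x ^+ d.
  by rewrite exprD1n big_ord_recr big_ord_recr /= binn binSn mulr_natl addrK.
rewrite !(hornerZ, hornerD, hornerN, hornerXn) -mulrBr.
have -> : (x + 1) ^+ d.+1 - S.[x + 1] - (x ^+ d.+1 - S.[x]) =
    ((x + 1) ^+ d.+1 - x ^+ d.+1) - (S.[x + 1] - S.[x]) by ring.
by rewrite XE SE addrC addKr mulKf ?pnatr_eq0.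
Qed.

Lemma poly_antidifference r : exists P, forall x, P.[x + 1] - P.[x] = r.[x].
Proof.
rewrite -[r]coefK poly_def.
apply: (big_ind (fun r => exists P, forall x, P.[x + 1] - P.[x] = r.[x])).
- by exists 0 => x; rewrite !horner0 subrr.
- move=> r1 r2 [P1 P1E] [P2 P2E]; exists (P1 + P2) => x.
  by rewrite !hornerD -P1E -P2E; ring.
move=> i _; have [P PE] := antidifferenceXn i.
by exists (r`_i *: P) => x; rewrite !hornerZ -mulrBr PE hornerXn.
Qed.

Lemma poly_of_nat_difference (h : nat -> R) r :
  (forall m, h m.+1 = h m + r.[m%:R]) -> exists p, forall m : nat, p.[m%:R] = h m.
Proof.
move=> hS; have [P PE] := poly_antidifference r.
exists (P + (h 0%N - P.[0])%:P) => m; rewrite hornerD hornerC.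
elim: m => [|m IHm]; first by rewrite addrC subrK.
by rewrite hS -IHm -(PE m%:R) -natr1 addrAC subrKC.
Qed.

End PolyCharZero.

Lemma prod_add1_subsets (R : comNzRingType) (I : finType) (A : {set I}) (b : I -> R) :
  \prod_(i in A) (1 + b i) = \sum_(J : {set I} | J \subset A) \prod_(i in J) b i.
Proof.
rewrite big_mkcond /=.
transitivity (\prod_i ((if i \in A then b i else 0) + 1)).
  by apply: eq_bigr => i _; case: ifP => _; rewrite ?add0r // addrC.
rewrite bigA_distr (bigID (fun J : {set I} => J \subset A)) /=.
rewrite [X in _ + X]big1 ?addr0; last first.
  by move=> J /subsetPn [i iJ iA]; rewrite (bigD1 i) //= iJ (negbTE iA) mul0r.
apply: eq_bigr => J JA; rewrite [RHS]big_mkcond /=.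
by apply: eq_bigr => i _; case: ifP => // iJ; rewrite (subsetP JA _ iJ).
Qed.

Lemma expr_card_subsets (R : comNzRingType) (I : finType) (A : {set I}) (t : R) :
  t ^+ #|A| = \sum_(J : {set I} | J \subset A) (t - 1) ^+ #|J|.
Proof.
rewrite -prodr_const -[t in LHS](addrNK 1) addrC prod_add1_subsets.
by apply: eq_bigr => J _; rewrite prodr_const.
Qed.

Lemma prod_1sub_subsets (R : comNzRingType) (I : finType) (A : {set I}) (b : I -> R) :
  \prod_(i in A) (1 - b i) = \sum_(J : {set I} | J \subset A) (-1) ^+ #|J| * \prod_(i in J) b i.
Proof.
by rewrite prod_add1_subsets; apply: eq_bigr => J _; rewrite prodrN.
Qed.

Lemma prod_indicator (R : comNzRingType) (I : finType) (J : {set I}) (P : pred I) :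
  \prod_(i in J) ((P i)%:R : R) = ([forall i in J, P i])%:R.
Proof.
have [/forall_inP PJ | /forall_inPn [i iJ Pi]] := boolP [forall i in J, P i].
  by apply: big1 => i iJ; rewrite PJ.
by rewrite (bigD1 i) //= (negbTE Pi) mul0r.
Qed.

Section AcyclicOrientations.
Variables (T : finType) (e : rel T).
Hypothesis e_sym : ssrbool.symmetric e.
Implicit Types (U S : {set T}) (D : {set T * T}).

Definition stable_set S := [forall x, forall y, (x \in S) && (y \in S) ==> ~~ e x y].

Definition orientation_on U D :=
  [forall x, forall y, (((x, y) \in D) ==> [&& x \in U, y \in U & e x y]) &&
     ([&& x \in U, y \in U & e x y] ==> (((x, y) \in D) != ((y, x) \in D)))].

Definition acyclic_on U D := orientation_on U D &&
  [forall x, forall y, ((x, y) \in D) ==> ~~ connect (arc_rel D) y x].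

Definition num_acyclic_on U := #|[set D | acyclic_on U D]|.

Lemma stable_setP S : reflect (forall x y, x \in S -> y \in S -> ~~ e x y) (stable_set S).
Proof.
apply: (iffP forallP) => [h x y xS yS | h x].
  by have /forallP/(_ y) := h x; rewrite xS yS.
by apply/forallP => y; apply/implyP => /andP [xS yS]; apply: h.
Qed.

Lemma stable_set0 : stable_set set0.
Proof. by apply/stable_setP => x y; rewrite inE. Qed.

Lemma orientation_onP U D : reflect
  ((forall x y, (x, y) \in D -> [/\ x \in U, y \in U & e x y]) /\
   (forall x y, x \in U -> y \in U -> e x y -> ((x, y) \in D) != ((y, x) \in D)))
  (orientation_on U D).
Proof.
apply: (iffP forallP) => [h|[h1 h2] x].
  split=> x y; have /forallP/(_ y)/andP[/implyP h1 /implyP h2] := h x.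
    by move=> /h1 /and3P.
  by move=> xU yU exy; apply: h2; rewrite xU yU exy.
apply/forallP => y; apply/andP; split; apply/implyP.
  by move=> /h1 [-> -> ->].
by move=> /and3P [xU yU exy]; apply: h2.
Qed.

Lemma acyclic_onP U D : reflect
  (orientation_on U D /\ forall x y, (x, y) \in D -> ~~ connect (arc_rel D) y x)
  (acyclic_on U D).
Proof.
apply: (iffP andP) => [[h1 /forallP h2]|[h1 h2]]; split => //.
  by move=> x y; have /forallP/(_ y)/implyP := h2 x; apply.
by apply/forallP => x; apply/forallP => y; apply/implyP; apply: h2.
Qed.

Lemma acyclic_onT D : acyclic_on setT D = acyclic_orientation e D.
Proof.
congr andb; apply: eq_forallb => x; apply: eq_forallb => y.
by rewrite !in_setT.
Qed.

Lemma acyclic_on0 D : acyclic_on set0 D = (D == set0).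
Proof.
apply/idP/eqP => [/acyclic_onP [/orientation_onP [h _] _] | ->].
  by apply/setP => [[x y]]; rewrite inE; apply/negP => /h []; rewrite inE.
apply/acyclic_onP; split; last by move=> x y; rewrite inE.
by apply/orientation_onP; split => x y; rewrite ?inE.
Qed.

(* A vertex of U minimising the number of vertices reachable from it is a sink. *)
Lemma acyclic_on_sink U D : acyclic_on U D -> U != set0 ->
  exists2 v, v \in U & v \in sinks D.
Proof.
move=> /acyclic_onP [/orientation_onP [hD _] hac] /set0Pn [v0 v0U].
pose reach v := [set y | connect (arc_rel D) v y].
have [v vU vmin] := arg_minnP (fun v => #|reach v|) v0U.
exists v => //; rewrite inE; apply/forallP => w; apply/negP => vw.
have [_ wU _] := hD _ _ vw.
have := vmin w wU; rewrite leqNgt => /negP; apply.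
apply: proper_card; apply/properP; split.
  apply/subsetP => y; rewrite !inE => /(connect_trans _); apply.
  exact: connect1.
by exists v; rewrite inE ?connect0 //; apply: hac.
Qed.

Definition arcs_into U S : {set T * T} :=
  [set p | [&& p.1 \in U :\: S, p.2 \in S & e p.1 p.2]].

Definition arcs_off S D : {set T * T} :=
  [set p in D | (p.1 \notin S) && (p.2 \notin S)].

Lemma connect_avoid_sinks D D' S x y :
  (forall z w, (z, w) \in D -> z \notin S) ->
  (forall z w, (z, w) \in D -> w \notin S -> (z, w) \in D') ->
  connect (arc_rel D) y x -> x \notin S -> connect (arc_rel D') y x.
Proof.
move=> noout DD' /connectP [p pth ->] {x}.
elim: p y pth => [|z p IH] y /=; first by move=> _ _; apply: connect0.
case/andP => yz pth hx.
have zS : z \notin S.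
  by case: p pth hx {IH} => [|w p] //= /andP [zw _] _; apply: (noout z w).
by apply: (connect_trans (connect1 _)); [apply: DD' yz zS | apply: IH].
Qed.

Lemma add_sinks_source U S D' : orientation_on (U :\: S) D' ->
  forall z w, (z, w) \in D' :|: arcs_into U S -> z \notin S.
Proof.
move=> /orientation_onP [hD' _] z w.
by rewrite !inE => /orP [/hD' [] | /and3P []]; rewrite ?inE => /andP [].
Qed.

Lemma orientation_on_add_sinks U S D' : S \subset U -> stable_set S ->
  orientation_on (U :\: S) D' -> orientation_on U (D' :|: arcs_into U S).
Proof.
move=> SU /stable_setP Sst /orientation_onP [hD' hD'2].
have notD' x y : (x \in S) || (y \in S) -> ((x, y) \in D') = false.
  apply: contraTF => /hD' [].
  by rewrite !inE negb_or => /andP [-> _] /andP [-> _].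
apply/orientation_onP; split.
  move=> x y; rewrite !inE => /orP [/hD' [] | /and3P [] ] /=.
    by move=> /setDP [xU _] /setDP [yU _] exy.
  by move=> /andP [_ xU] yS exy; split; rewrite // (subsetP SU).
move=> x y xU yU exy; rewrite !inE /=.
have [xS|xS] := boolP (x \in S); have [yS|yS] := boolP (y \in S).
- by have := Sst x y xS yS; rewrite exy.
- by rewrite !notD' ?xS ?orbT //= yU e_sym exy.
- by rewrite !notD' ?yS ?orbT //= xU exy.
- by rewrite !andbF !orbF; apply: hD'2; rewrite ?inE ?xS ?yS.
Qed.

Lemma acyclic_on_add_sinks U S D' : S \subset U -> stable_set S ->
  acyclic_on (U :\: S) D' ->
  acyclic_on U (D' :|: arcs_into U S) && (S \subset sinks (D' :|: arcs_into U S)).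
Proof.
move=> SU Sst /acyclic_onP [oD' hac].
have noout := add_sinks_source oD'.
apply/andP; split; last first.
  apply/subsetP => s sS; rewrite inE; apply/forallP => w; apply/negP => /noout.
  by rewrite sS.
apply/acyclic_onP; split; first exact: orientation_on_add_sinks.
move=> x y xy.
have [yS|yS] := boolP (y \in S).
  apply/negP => /connectP [[|z p] /=].
    by move=> _ exy; move: (noout _ _ xy); rewrite exy yS.
  by case/andP => /noout; rewrite yS.
have xyD' : (x, y) \in D' by move: xy; rewrite !inE (negbTE yS) /= andbF orbF.
apply/negP => /(connect_avoid_sinks noout) yx; have /negP := hac _ _ xyD'; apply.
by apply: yx; rewrite ?(noout _ _ xy) // => z w; rewrite !inE => /orP [//|/and3P [_ ->]].
Qed.

Lemma acyclic_on_remove_sinks U S D : S \subset U -> acyclic_on U D -> S \subset sinks D ->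
  [/\ stable_set S, acyclic_on (U :\: S) (arcs_off S D) & D = arcs_off S D :|: arcs_into U S].
Proof.
move=> SU /acyclic_onP [/orientation_onP [hD1 hD2] hac] Ssink.
have noout z w : (z, w) \in D -> z \notin S.
  move=> zw; apply/negP => /(subsetP Ssink); rewrite inE.
  by move=> /forallP /(_ w); rewrite zw.
split.
- apply/stable_setP => x y xS yS; apply/negP => exy.
  have := hD2 x y (subsetP SU _ xS) (subsetP SU _ yS) exy.
  by rewrite (contraTF (@noout x y)) ?(contraTF (@noout y x)) ?xS ?yS.
- apply/acyclic_onP; split.
    apply/orientation_onP; split.
      move=> x y; rewrite !inE /= => /andP [/hD1 [xU yU exy] /andP [xS yS]].
      by rewrite xS yS xU yU.
    move=> x y; rewrite !inE /= => /andP [xS xU] /andP [yS yU] exy.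
    by rewrite xS yS /= !andbT; apply: hD2.
  move=> x y; rewrite inE /= => /andP [xy _].
  apply/negP => /(connect_sub _) yx; have /negP := hac _ _ xy; apply; apply: yx.
  by move=> a b; rewrite /arc_rel inE => /andP [ab _]; apply: connect1.
- apply/setP => [[x y]]; rewrite !inE /=.
  have [xyD|xyD] /= := boolP ((x, y) \in D).
    have [xU yU exy] := hD1 _ _ xyD.
    by rewrite (noout x y) //=; case: (y \in S); rewrite /= ?xU ?exy.
  apply/esym/negP => /and3P [/andP [xS xU] yS exy].
  have := hD2 x y xU (subsetP SU _ yS) exy; rewrite (negbTE xyD) /=.
  by apply/negP; rewrite negbK; apply: contraTN yS => /noout.
Qed.

Lemma card_acyclic_on_sinks U S : S \subset U ->
  #|[set D | acyclic_on U D & S \subset sinks D]| =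
  if stable_set S then num_acyclic_on (U :\: S) else 0%N.
Proof.
move=> SU; case: ifP => Sst; last first.
  apply: eq_card0 => D; rewrite !inE; apply/negP => /andP [ac sk].
  by have [] := acyclic_on_remove_sinks SU ac sk; rewrite Sst.
have inj : {in [set D' | acyclic_on (U :\: S) D'] &, injective (fun D' => D' :|: arcs_into U S)}.
  move=> D1 D2; rewrite !inE => /andP [/orientation_onP [h1 _] _].
  move=> /andP [/orientation_onP [h2 _] _] E; apply/setP => [[x y]].
  have arcE D' : (forall x y, (x, y) \in D' -> [/\ x \in U :\: S, y \in U :\: S & e x y]) ->
      ((x, y) \in D') = ((x, y) \in D' :|: arcs_into U S) && (y \notin S).
    move=> hD'; rewrite !inE /=; have [xyD'|_] /= := boolP ((x, y) \in D').
      by have [_ ] := hD' _ _ xyD'; rewrite inE => /andP [-> _].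
    by case: (y \in S); rewrite ?andbF.
  by rewrite (arcE D1 h1) (arcE D2 h2) E.
rewrite /num_acyclic_on -(card_in_imset inj).
apply: eq_card => D; rewrite inE; apply/idP/imsetP.
  move=> /andP [ac sk]; have [_ ac' ->] := acyclic_on_remove_sinks SU ac sk.
  by exists (arcs_off S D); rewrite ?inE.
by move=> [D' ]; rewrite inE => ac' ->; apply: acyclic_on_add_sinks.
Qed.

Lemma sum_acyclic_on_sinks (R : comNzRingType) U (t : R) :
  \sum_(D | acyclic_on U D) t ^+ #|U :&: sinks D| =
  \sum_(S : {set T} | S \subset U)
     (t - 1) ^+ #|S| * (if stable_set S then num_acyclic_on (U :\: S) else 0%N)%:R.
Proof.
under eq_bigr => D _ do rewrite expr_card_subsets.
rewrite (exchange_big_dep (fun S : {set T} => S \subset U)) /=; last first.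
  by move=> D S _ /subset_trans; apply; apply: subsetIl.
apply: eq_bigr => S SU; rewrite -(card_acyclic_on_sinks SU).
rewrite (eq_bigl (mem [set D | acyclic_on U D & S \subset sinks D])); last first.
  by move=> D; rewrite !inE subsetI SU.
by rewrite sumr_const mulr_natr.
Qed.

(* Put t = 0 above: a nonempty acyclic orientation always has a sink. *)
Lemma alternating_sum_acyclic_on (R : comNzRingType) U :
  \sum_(S : {set T} | S \subset U)
     (-1) ^+ #|S| * (if stable_set S then num_acyclic_on (U :\: S) else 0%N)%:R
  = (U == set0)%:R :> R.
Proof.
have := sum_acyclic_on_sinks U (0 : R); rewrite sub0r => <-.
have [-> | Un] := eqVneq U set0.
  rewrite (eq_bigl (pred1 set0)) ?big_pred1_eq ?set0I ?cards0 //.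
  by move=> D; rewrite acyclic_on0.
apply: big1 => D ac; rewrite expr0n.
have [v vU vs] := acyclic_on_sink ac Un.
suff : (0 < #|U :&: sinks D|)%N by case: #|_|.
by apply/card_gt0P; exists v; rewrite inE vU.
Qed.

End AcyclicOrientations.

Section Colorings.
Variables (T : finType) (e : rel T).
Implicit Types (U S : {set T}).

(* Colour 0 marks the vertices outside U; the colours 1..m properly colour the subgraph
   induced on U. *)
Definition coloring_on U m (k : {ffun T -> 'I_m.+1}) : bool :=
  [forall v, (k v == ord0) == (v \notin U)] &&
  [forall u, forall v, e u v ==> (k u != k v) || (k u == ord0)].

Definition num_colorings_on U m := #|[set k : {ffun T -> 'I_m.+1} | coloring_on U k]|.

Lemma coloring_onP U m (k : {ffun T -> 'I_m.+1}) : reflect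
  ((forall v, (k v == ord0) = (v \notin U)) /\
   (forall u v, e u v -> k u != ord0 -> k u != k v)) (coloring_on U k).
Proof.
apply: (iffP andP) => [[/forallP h1 /forallP h2]|[h1 h2]]; split.
- by move=> v; have /eqP := h1 v.
- move=> u v euv ku; have /forallP /(_ v) /implyP /(_ euv) := h2 u.
  by rewrite (negbTE ku) orbF.
- by apply/forallP => v; rewrite h1.
- apply/forallP => u; apply/forallP => v; apply/implyP => euv.
  by have [->|ku] := eqVneq (k u) ord0; rewrite ?orbT // orbF h2.
Qed.

Lemma num_colorings_on0 U : num_colorings_on U 0 = (U == set0).
Proof.
rewrite /num_colorings_on; have [->|/set0Pn [v vU]] /= := eqVneq U set0.
  rewrite (eq_card (B := predT)) ?card_ffun ?card_ord ?exp1n // => k.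
  by rewrite !inE; apply/coloring_onP; split => [v|u v _]; rewrite ord1 ?inE eqxx.
apply: eq_card0 => k; rewrite inE; apply/negP => /coloring_onP [h _].
by have := h v; rewrite vU ord1 eqxx.
Qed.

Section TopColour.
Variable m : nat.
Implicit Types (k : {ffun T -> 'I_m.+2}) (c : {ffun T -> 'I_m.+1}).

Definition top_class k := [set v | k v == ord_max].

Definition lift_coloring S c : {ffun T -> 'I_m.+2} :=
  [ffun v => if v \in S then ord_max else lift ord_max (c v)].

Definition drop_top k : {ffun T -> 'I_m.+1} := [ffun v => odflt ord0 (unlift ord_max (k v))].

Lemma lift_max_eq0 (i : 'I_m.+1) : (lift ord_max i == ord0) = (i == ord0).
Proof.
apply/eqP/eqP => [/(congr1 (@nat_of_ord _))|->]; first by rewrite lift_max => h; apply/val_inj.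
exact: val_inj.
Qed.

Lemma top_class_stable U k : coloring_on U k -> top_class k \subset U /\ stable_set e (top_class k).
Proof.
move=> /coloring_onP [h1 h2]; split.
  by apply/subsetP => v; rewrite inE => /eqP kv; apply/negPn; rewrite -h1 kv.
apply/stable_setP => u v; rewrite !inE => /eqP ku /eqP kv; apply/negP => euv.
by move: (h2 u v euv); rewrite ku kv eqxx => /(_ isT).
Qed.

Lemma lift_coloring_on U S c : S \subset U -> stable_set e S -> coloring_on (U :\: S) c ->
  [/\ coloring_on U (lift_coloring S c), top_class (lift_coloring S c) = S
    & drop_top (lift_coloring S c) = c].
Proof.
move=> SU /stable_setP Sst /coloring_onP [h1 h2]; split.
- apply/coloring_onP; split => [v|u v euv]; rewrite !ffunE.
    case: ifP => vS; first by rewrite (subsetP SU).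
    by rewrite lift_max_eq0 h1 !inE vS.
  case: ifP => uS; case: ifP => vS //; rewrite ?eq_liftF ?lift_eqF //.
  + by have := Sst u v uS vS; rewrite euv.
  + by rewrite lift_max_eq0 (inj_eq lift_inj); apply: h2.
- by apply/setP => v; rewrite !inE ffunE; case: ifP; rewrite ?eqxx ?lift_eqF.
apply/ffunP => v; rewrite !ffunE; case: ifP => vS; last by rewrite liftK.
by rewrite unlift_none; apply/esym/eqP; rewrite h1 !inE vS.
Qed.

Lemma drop_top_coloring_on U k : coloring_on U k ->
  coloring_on (U :\: top_class k) (drop_top k) /\ lift_coloring (top_class k) (drop_top k) = k.
Proof.
move=> /coloring_onP [h1 h2].
have dropE v : v \in top_class k -> drop_top k v = ord0.
  by rewrite inE ffunE => /eqP ->; rewrite unlift_none.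
have liftE v : v \notin top_class k -> lift ord_max (drop_top k v) = k v.
  by rewrite inE ffunE; case: unliftP => [j ->|->]; rewrite ?eqxx.
have kE : lift_coloring (top_class k) (drop_top k) = k.
  apply/ffunP => v; rewrite ffunE; case: ifP => [|/negbT/liftE //].
  by rewrite inE => /eqP.
split=> //; apply/coloring_onP; split=> [v|u v euv].
  have [vS|vS] := boolP (v \in top_class k); first by rewrite dropE // eqxx in_setD vS.
  by rewrite -lift_max_eq0 liftE // h1 in_setD vS.
have [uS|uS] := boolP (u \in top_class k); first by rewrite dropE ?eqxx.
rewrite -lift_max_eq0 liftE // => ku; have [vS|vS] := boolP (v \in top_class k).
  by rewrite (dropE v vS) -lift_max_eq0 liftE.
by rewrite -(inj_eq (@lift_inj _ ord_max)) !liftE // h2.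
Qed.

Lemma card_coloring_on_top U S : S \subset U ->
  #|[set k | coloring_on U k & top_class k == S]| =
  if stable_set e S then num_colorings_on (U :\: S) m else 0%N.
Proof.
move=> SU; case: ifP => Sst; last first.
  apply: eq_card0 => k; rewrite !inE; apply/negP => /andP [ok /eqP tS].
  by have [_] := top_class_stable ok; rewrite tS Sst.
have lift_coloringK : {in [set c | coloring_on (U :\: S) c], cancel (lift_coloring S) drop_top}.
  by move=> c; rewrite inE => /(lift_coloring_on SU Sst) [].
rewrite /num_colorings_on -(card_in_imset (can_in_inj lift_coloringK)).
apply: eq_card => k; rewrite inE; apply/andP/imsetP => [[ok /eqP tS]|[c ]].
  have [oc kE] := drop_top_coloring_on ok.
  by exists (drop_top k); rewrite ?inE -tS.
by rewrite inE => /(lift_coloring_on SU Sst) [ok tS _] ->; rewrite ok tS.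
Qed.

Lemma num_colorings_on_rec U : num_colorings_on U m.+1 =
  (\sum_(S : {set T} | S \subset U) if stable_set e S then num_colorings_on (U :\: S) m else 0)%N.
Proof.
rewrite /num_colorings_on -sum1_card.
rewrite (partition_big top_class (fun S => S \subset U)) /=; last first.
  by move=> k; rewrite inE => /top_class_stable [].
apply: eq_bigr => S SU; rewrite -(card_coloring_on_top SU) -sum1_card.
by apply: eq_bigl => k; rewrite !inE.
Qed.

End TopColour.
End Colorings.

Section ChromaticPolynomial.
Variables (T : finType) (e : rel T).
Implicit Types (U S : {set T}).

Lemma card_setD_lt U S n : (#|U| < n.+1)%N -> S \subset U -> S != set0 -> (#|U :\: S| < n)%N.
Proof.
move=> ltUn SU; rewrite -card_gt0 cardsDS // => S0.
by have := subset_leq_card SU; lia.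
Qed.

Lemma chromatic_poly_exists U :
  exists p : {poly rat}, forall m : nat, p.[m%:R] = (num_colorings_on e U m)%:R.
Proof.
have [n ltUn] := ubnP #|U|; elim: n U ltUn => // n IH U ltUn.
have /fin_all_exists [p pE] S : exists p : {poly rat}, S \subset U -> S != set0 ->
    forall m : nat, p.[m%:R] = (num_colorings_on e (U :\: S) m)%:R.
  have [SU|_] := boolP (S \subset U); last by exists 0.
  have [->|S0] := eqVneq S set0; first by exists 0.
  by have [q qE] := IH _ (card_setD_lt ltUn SU S0); exists q.
pose r := \sum_(S : {set T} | (S \subset U) && (S != set0)) if stable_set e S then p S else 0.
apply: (@poly_of_nat_difference _ _ r) => m.
rewrite num_colorings_on_rec natr_sum (bigD1 set0) ?sub0set //= stable_set0 setD0.
rewrite horner_sum; congr (_ + _); apply: eq_bigr => S /andP [SU S0].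
by case: ifP => _; rewrite ?horner0 ?pE.
Qed.

Variable chi : {set T} -> {poly rat}.
Hypothesis chiE : forall U (m : nat), (chi U).[m%:R] = (num_colorings_on e U m)%:R.

Lemma chromatic_poly_shift U x : (chi U).[x + 1] =
  \sum_(S : {set T} | S \subset U) if stable_set e S then (chi (U :\: S)).[x] else 0.
Proof.
pose q := \sum_(S : {set T} | S \subset U) if stable_set e S then chi (U :\: S) else 0.
suff /(congr1 (horner^~ x)) : chi U \Po ('X + 1) = q.
  rewrite horner_comp !hornerE /q horner_sum => ->.
  by apply: eq_bigr => S _; case: ifP; rewrite ?horner0.
apply: poly_eq_nat => m; rewrite horner_comp !hornerE natr1 chiE.
rewrite num_colorings_on_rec natr_sum /q horner_sum; apply: eq_bigr => S _.
by case: ifP; rewrite ?horner0 ?chiE.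
Qed.

Hypothesis e_sym : ssrbool.symmetric e.

Lemma chromatic_poly_N1 U : (chi U).[-1] = (-1) ^+ #|U| * (num_acyclic_on e U)%:R.
Proof.
have [n ltUn] := ubnP #|U|; elim: n U ltUn => // n IH U ltUn.
set sU := (-1) ^+ #|U| : rat.
pose a S := (if stable_set e S then num_acyclic_on e (U :\: S) else 0%N)%:R : rat.
pose rest := \sum_(S : {set T} | (S \subset U) && (S != set0)) (-1) ^+ #|S| * a S.
have restE : rest = (U == set0)%:R - (num_acyclic_on e U)%:R.
  rewrite -(alternating_sum_acyclic_on e_sym _ U) (bigD1 set0) ?sub0set //=.
  by rewrite /a stable_set0 setD0 cards0 expr0 mul1r addrC addrK.
have := chromatic_poly_shift U (-1); rewrite addNr (chiE U 0) num_colorings_on0.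
rewrite (bigD1 set0) ?sub0set //= stable_set0 setD0.
have -> : \sum_(S : {set T} | (S \subset U) && (S != set0))
    (if stable_set e S then (chi (U :\: S)).[-1] else 0) = sU * rest.
  rewrite /rest mulr_sumr; apply: eq_bigr => S /andP [SU S0]; rewrite /a.
  case: ifP => _; last by rewrite !mulr0.
  rewrite IH ?(card_setD_lt ltUn SU S0) // mulrA; congr (_ * _).
  rewrite /sU -(cardsID S U) (setIidPr SU) exprD mulrAC.
  by rewrite -exprMn mulrNN mulr1 expr1n mul1r.
rewrite restE => shiftE.
have -> : (chi U).[-1] = (U == set0)%:R - sU * ((U == set0)%:R - (num_acyclic_on e U)%:R).
  by rewrite {1}shiftE addrK.
have [U0|_] /= := eqVneq U set0; last by rewrite mulrBr mulr0 !sub0r opprK.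
by rewrite /sU U0 cards0 expr0 !mul1r opprB addrC subrK.
Qed.

End ChromaticPolynomial.

Lemma rmorph_mmap n (R : nzRingType) (S S' : comNzRingType) (g : {rmorphism S -> S'})
  (f : R -> S) (h : 'I_n -> S) (p : {mpoly R[n]}) :
  g (mmap f h p) = mmap (g \o f) (g \o h) p.
Proof.
rewrite /mmap rmorph_sum; apply: eq_bigr => m _.
rewrite rmorphM /mmap1 rmorph_prod; congr (_ * _); apply: eq_bigr => i _.
by rewrite rmorphXn.
Qed.

Lemma eq_mmap n (R S : nzRingType) (f1 f2 : R -> S) (h1 h2 : 'I_n -> S) (p : {mpoly R[n]}) :
  f1 =1 f2 -> h1 =1 h2 -> mmap f1 h1 p = mmap f2 h2 p.
Proof.
move=> ef eh; rewrite /mmap; apply: eq_bigr => m _.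
by rewrite (mmap1_eq _ eh) ef.
Qed.

Lemma horner_mmap M (Q : {mpoly rat[M]}) (h : 'I_M -> {poly rat}) (c : rat) :
  (mmap (@polyC rat) h Q).[c] = meval (fun j => (h j).[c]) Q.
Proof.
rewrite -horner_evalE rmorph_mmap /meval.
by apply: eq_mmap => // x /=; rewrite horner_evalE hornerC.
Qed.

Lemma zetaE N j : zeta N j = \sum_(i < N) ((1 + 'X_i) ^+ j - 1).
Proof.
rewrite /zeta /psum; under eq_bigr do rewrite scaler_nat -sumrMnl.
rewrite exchange_big; apply: eq_bigr => i _.
by rewrite [1 + _]addrC exprD1n big_ord_recl /= expr0 bin0 addrC addKr big_add1 big_mkord.
Qed.

Lemma meval_zeta N (v : 'I_N -> rat) j :
  meval v (zeta N j) = \sum_(i < N) ((1 + v i) ^+ j - 1).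
Proof.
rewrite zetaE rmorph_sum; apply: eq_bigr => i _.
by rewrite rmorphB rmorphXn rmorphD /= meval1 mevalXU.
Qed.

Lemma meval_eval_zeta M N (v : 'I_N -> rat) (Q : {mpoly rat[M]}) :
  meval v (eval_zeta N Q) = meval (fun j => meval v (zeta N j.+1)) Q.
Proof.
rewrite /eval_zeta -[fun c : rat => _]/(@mpolyC N rat) rmorph_mmap /meval.
by apply: eq_mmap => // c /=; rewrite mevalC.
Qed.

Lemma meval_chromsym (T : finType) (e : rel T) N (v : 'I_N -> rat) :
  meval v (chromsym e N) =
  \sum_(k : {ffun T -> 'I_N} | proper_coloring e k) \prod_(x : T) v (k x).
Proof.
rewrite /chromsym rmorph_sum; apply: eq_bigr => k _.
by rewrite rmorph_prod; apply: eq_bigr => x _; apply: mevalXU.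
Qed.

Definition weight_poly M (Q : {mpoly rat[M]}) : {poly rat} :=
  mmap (@polyC rat) (fun j : 'I_M => 'X^(j.+1)) Q.

Lemma coef_weight_poly M (Q : {mpoly rat[M]}) k : (weight_poly Q)`_k = coef_sum_weight Q k.
Proof.
rewrite /weight_poly /mmap /coef_sum_weight coef_sum [RHS]big_mkcond /=.
apply: eq_bigr => m _.
have -> : mmap1 (fun j : 'I_M => 'X^(j.+1)) m = 'X^(zeta_weight m) :> {poly rat}.
  by rewrite /mmap1 /zeta_weight; under eq_bigr do rewrite -exprM; rewrite prodrXr.
by rewrite coefCM coefXn eq_sym; case: eqP; rewrite ?mulr1 ?mulr0.
Qed.

Section SinkPolynomial.
Variables (T : finType) (e : rel T).

Definition sink_poly : {poly rat} :=
  \sum_(D : {set T * T} | acyclic_orientation e D) 'X^#|sinks D|.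

Lemma coef_sink_poly k : sink_poly`_k = (num_acyclic_sinks e k)%:R.
Proof.
rewrite coef_sum /num_acyclic_sinks -sum1_card natr_sum.
rewrite [LHS]big_mkcond [RHS]big_mkcond; apply: eq_bigr => D _.
by rewrite !inE coefXn eq_sym; case: (acyclic_orientation e D); case: (_ == _).
Qed.

Lemma horner_sink_poly (e_sym : ssrbool.symmetric e) t : sink_poly.[t] =
  \sum_(S : {set T} | stable_set e S) (t - 1) ^+ #|S| * (num_acyclic_on e (~: S))%:R.
Proof.
rewrite horner_sum (eq_bigl (acyclic_on e setT)) => [|D]; last by rewrite acyclic_onT.
under eq_bigr => D _ do rewrite hornerXn -(setTI (sinks D)).
rewrite sum_acyclic_on_sinks // [LHS]big_mkcond [RHS]big_mkcond.
by apply: eq_bigr => S _; rewrite subsetT setTD; case: ifP; rewrite ?mulr0.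
Qed.

Lemma weighted_proper_colorings m (t : rat) :
  \sum_(k : {ffun T -> 'I_m.+1} | proper_coloring e k)
     \prod_(x : T) (if k x == ord0 then t - 1 else -1)
  = \sum_(S : {set T} | stable_set e S)
      (t - 1) ^+ #|S| * (-1) ^+ #|~: S| * (num_colorings_on e (~: S) m)%:R.
Proof.
rewrite (partition_big (fun k : {ffun T -> 'I_m.+1} => [set v | k v == ord0]) (stable_set e)) /=;
  last first.
  move=> k /forallP pk; apply/stable_setP => x y; rewrite !inE => /eqP kx /eqP ky.
  by apply/negP => exy; have /forallP /(_ y) /implyP /(_ exy) := pk x; rewrite kx ky eqxx.
apply: eq_bigr => S Sst.
rewrite (eq_bigr (fun _ => (t - 1) ^+ #|S| * (-1) ^+ #|~: S|)); last first.
  move=> k /andP [_ /eqP kS].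
  rewrite (bigID (mem S)) /= -!prodr_const; congr (_ * _); apply: eq_big => x //.
  - by rewrite -kS inE => ->.
  - by rewrite inE.
  - by rewrite -kS inE => /negbTE ->.
rewrite (eq_bigl (mem [set k : {ffun T -> 'I_m.+1} | coloring_on e (~: S) k])).
  by rewrite sumr_const mulr_natr.
move=> k; rewrite !inE; apply/andP/coloring_onP => [[/forallP pk /eqP kS]|[h1 h2]].
  split=> [v|u v euv _]; first by rewrite -kS !inE negbK.
  by have /forallP /(_ v) /implyP := pk u; apply.
split; last by apply/eqP/setP => v; rewrite !inE h1 inE negbK.
apply/forallP => u; apply/forallP => v; apply/implyP => euv.
have [ku|ku] := eqVneq (k u) ord0; last exact: h2.
have [kv|kv] := eqVneq (k v) ord0; last by rewrite ku eq_sym.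
move: (h1 u) (h1 v); rewrite ku kv !inE !negbK eqxx => uS vS.
by move/stable_setP: Sst => /(_ u v); rewrite -uS -vS euv => /(_ isT isT).
Qed.

(* Evaluating X_G at x_1 = t - 1 and x_2 = ... = x_(m+1) = -1 sends zeta_j to t^j - 1 - m. *)
Lemma represents_chromsym_eval M (Q : {mpoly rat[M]}) m t : represents_chromsym e Q ->
  meval (fun j : 'I_M => t ^+ j.+1 - 1 - m%:R) Q =
  \sum_(S : {set T} | stable_set e S)
    (t - 1) ^+ #|S| * (-1) ^+ #|~: S| * (num_colorings_on e (~: S) m)%:R.
Proof.
move=> rep; rewrite -weighted_proper_colorings.
rewrite -(meval_chromsym e (fun i : 'I_m.+1 => if i == ord0 then t - 1 else -1)).
rewrite -rep meval_eval_zeta; apply: meval_eq => j.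
rewrite meval_zeta big_ord_recl /= [1 + (t - 1)]addrC subrK subrr expr0n /= sub0r.
by rewrite sumr_const card_ord mulNrn.
Qed.

End SinkPolynomial.

Lemma weight_poly_represents (T : finType) (e : rel T) M (Q : {mpoly rat[M]}) :
  ssrbool.symmetric e -> represents_chromsym e Q -> weight_poly Q = sink_poly e.
Proof.
move=> e_sym rep; have /fin_all_exists [chi chiE] := chromatic_poly_exists e.
apply: poly_eq_nat => n; set t : rat := n%:R.
pose G := mmap (@polyC rat) (fun j : 'I_M => (t ^+ j.+1 - 1)%:P - 'X) Q.
pose H := \sum_(S : {set T} | stable_set e S) ((t - 1) ^+ #|S| * (-1) ^+ #|~: S|) *: chi (~: S).
(* G is Q evaluated at zeta_j := t^j - 1 - c, a polynomial in c: at c = m it is the weighted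
   colouring sum above, at c = -1 it is the weight polynomial at t. *)
have GH : G = H.
  apply: poly_eq_nat => m; rewrite horner_mmap horner_sum.
  rewrite (@meval_eq _ _ _ (fun j : 'I_M => t ^+ j.+1 - 1 - m%:R)) => [|j]; last first.
    by rewrite hornerD hornerN hornerC hornerX.
  rewrite (represents_chromsym_eval _ _ rep); apply: eq_bigr => S _.
  by rewrite hornerZ chiE.
have -> : (weight_poly Q).[t] = G.[-1].
  rewrite !horner_mmap; apply: meval_eq => j.
  by rewrite hornerXn hornerD hornerN hornerC hornerX opprK subrK.
rewrite GH horner_sink_poly // horner_sum; apply: eq_bigr => S _.
rewrite hornerZ (chromatic_poly_N1 chiE e_sym) !mulrA; congr (_ * _).
by rewrite -mulrA -exprMn mulrNN mulr1 expr1n mulr1.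
Qed.

Section Components.
Variables (T : finType) (F : {set T * T}).

Definition arc_link : rel T := fun x y => ((x, y) \in F) || ((y, x) \in F).

Lemma arc_link_connect_sym : connect_sym arc_link.
Proof. by apply: sym_connect_sym => x y; rewrite /arc_link orbC. Qed.

Definition comp_root : T -> T := fingraph.root arc_link.

Definition comp_size w := #|[set v | comp_root v == w]|.

Definition comp_rep := {w : T | fingraph.roots arc_link w}.

Definition rep_of v : comp_rep :=
  exist _ (comp_root v) (introT eqP (root_root arc_link_connect_sym v)).

Lemma rep_of_val (r : comp_rep) : rep_of (val r) = r.
Proof. by case: r => w rw; apply/val_inj; apply/eqP. Qed.

Lemma rep_of_root v : rep_of (comp_root v) = rep_of v.
Proof. exact/val_inj/(root_root arc_link_connect_sym). Qed.

Lemma comp_size_bounds (r : comp_rep) : (0 < comp_size (val r) <= #|T|)%N.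
Proof.
rewrite max_card andbT; apply/card_gt0P; exists (val r).
by case: r => w rw; rewrite inE.
Qed.

Lemma const_on_arcsP N (k : {ffun T -> 'I_N}) :
  reflect (forall v, k v = k (comp_root v)) [forall p in F, k p.1 == k p.2].
Proof.
apply: (iffP forall_inP) => [kF v|kr [x y] xy /=].
  have kl x y : arc_link x y -> k x = k y.
    by case/orP => [xy|yx]; [apply/eqP/(kF (x, y)) | apply/esym/eqP/(kF (y, x))].
  rewrite /comp_root; have /connectP [p pth ->] := connect_root arc_link v.
  by elim: p v pth => [|z p IH] v //= /andP [vz pth]; rewrite (kl _ _ vz) IH.
have /(fingraph.rootP arc_link_connect_sym) : connect arc_link x y by apply/connect1/orP; left.
by rewrite kr [k y]kr /comp_root => ->.
Qed.

Lemma sum_const_on_arcs N :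
  \sum_(k : {ffun T -> 'I_N} | [forall p in F, k p.1 == k p.2]) \prod_v 'X_(k v)
  = \prod_(r : comp_rep) psum N (comp_size (val r)) :> {mpoly rat[N]}.
Proof.
pose extend (g : {ffun comp_rep -> 'I_N}) := [ffun v => g (rep_of v)].
have extend_inj : injective extend.
  move=> g1 g2 E; apply/ffunP => r; rewrite -(rep_of_val r).
  by have := congr1 (fun k : {ffun T -> 'I_N} => k (val r)) E; rewrite !ffunE.
rewrite (eq_bigl (mem (extend @: setT))) => [|k]; last first.
  apply/const_on_arcsP/imsetP => [kr|[g _ ->] v]; last by rewrite !ffunE rep_of_root.
  by exists [ffun r => k (val r)] => //; apply/ffunP => v; rewrite !ffunE kr.
rewrite big_imset /=; last by move=> g1 g2 _ _; apply: extend_inj.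
rewrite /psum bigA_distr_bigA /=; apply: eq_big => [g|g _]; first by rewrite inE.
rewrite (partition_big rep_of predT) //=; apply: eq_bigr => r _.
rewrite (eq_bigr (fun _ => 'X_(g r))) => [|v /eqP <-]; last by rewrite ffunE.
by rewrite prodr_const; congr (_ ^+ _); apply: eq_card => v; rewrite !inE.
Qed.

End Components.

Definition edge_set (T : finType) (e : rel T) : {set T * T} := [set p | e p.1 p.2].

Lemma chromsym_edge_expansion (T : finType) (e : rel T) N : chromsym e N =
  \sum_(F : {set T * T} | F \subset edge_set e)
     (-1) ^+ #|F| * \prod_(r : comp_rep F) psum N (comp_size F (val r)).
Proof.
rewrite /chromsym.
transitivity (\sum_(k : {ffun T -> 'I_N})
   (\prod_(p in edge_set e) (1 - ((k p.1 == k p.2)%:R : {mpoly rat[N]}))) * \prod_v 'X_(k v)).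
  rewrite [LHS]big_mkcond; apply: eq_bigr => k _.
  rewrite (eq_bigr (fun p => ((k p.1 != k p.2)%:R : {mpoly rat[N]}))); last first.
    by move=> p _; case: (_ == _); rewrite ?subrr ?subr0.
  rewrite prod_indicator.
  have -> : [forall (p | p \in edge_set e), k p.1 != k p.2] = proper_coloring e k.
    apply/forall_inP/forallP => [h u|h [u v]].
      by apply/forallP => v; apply/implyP => euv; apply: (h (u, v)); rewrite inE.
    by rewrite inE /= => euv; have /forallP /(_ v) /implyP := h u; apply.
  by case: (proper_coloring e k); rewrite ?mul1r ?mul0r.
under eq_bigr => k _ do rewrite prod_1sub_subsets big_distrl /=.
rewrite (exchange_big_dep (fun F : {set T * T} => F \subset edge_set e)) //=.
apply: eq_bigr => F FE; rewrite (eq_bigl predT) => [|k]; last by rewrite FE.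
rewrite -sum_const_on_arcs mulr_sumr [RHS]big_mkcond; apply: eq_bigr => k _.
by rewrite -mulrA prod_indicator; case: ifP; rewrite ?mul1r ?mul0r ?mulr0.
Qed.

Lemma binomial_inversion (R : comNzRingType) (x : R) c : (0 < c)%N ->
  \sum_(a < c.+1) 'C(c, a)%:R * (-1) ^+ (c - a) * ((1 + x) ^+ a - 1) = x ^+ c.
Proof.
move=> c_gt0.
have expE (y : R) : (-1 + y) ^+ c = \sum_(a < c.+1) 'C(c, a)%:R * (-1) ^+ (c - a) * y ^+ a.
  by rewrite exprDn; apply: eq_bigr => a _; rewrite mulr_natl mulrnAl mulrC.
under eq_bigr do rewrite mulrBr mulr1.
rewrite sumrB -expE addKr.
have -> : \sum_(a < c.+1) 'C(c, a)%:R * (-1) ^+ (c - a) = (-1 + 1) ^+ c :> R.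
  by rewrite expE; apply: eq_bigr => a _; rewrite expr1n mulr1.
by rewrite addNr expr0n (gtn_eqF c_gt0) subr0.
Qed.

Definition psum_in_zeta M c : {mpoly rat[M]} :=
  \sum_(i < M) ('C(c, i.+1)%:R * (-1) ^+ (c - i.+1)) *: 'X_i.

Lemma eval_psum_in_zeta M N c : (0 < c <= M)%N -> eval_zeta N (psum_in_zeta M c) = psum N c.
Proof.
move=> /andP [c_gt0 le_cM].
rewrite /eval_zeta -[fun c : rat => _]/(@mpolyC N rat) /psum_in_zeta raddf_sum /=.
under eq_bigr => i _ do rewrite mmapZ mmapX mmap1U zetaE mulr_sumr.
rewrite exchange_big /psum; apply: eq_bigr => j _.
pose f a := 'C(c, a)%:R * (-1) ^+ (c - a) * ((1 + 'X_j) ^+ a - 1) : {mpoly rat[N]}.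
transitivity (\sum_(a < M.+1) f a).
  rewrite big_ord_recl /f expr0 subrr mulr0 add0r; apply: eq_bigr => i _.
  by rewrite rmorphM rmorph_nat rmorphXn rmorphN1.
rewrite -(binomial_inversion _ c_gt0) [RHS](big_ord_widen M.+1 f) ?ltnS // [RHS]big_mkcond.
by apply: eq_bigr => a _; case: ltnP => // lt_ca; rewrite /f bin_small // !mul0r.
Qed.

Lemma represents_chromsym_exists (T : finType) (e : rel T) :
  exists (M : nat) (Q : {mpoly rat[M]}), represents_chromsym e Q.
Proof.
exists #|T|, (\sum_(F : {set T * T} | F \subset edge_set e)
  (-1) ^+ #|F| *: \prod_(r : comp_rep F) psum_in_zeta #|T| (comp_size F (val r))).
move=> N; rewrite chromsym_edge_expansion /eval_zeta -[fun c : rat => _]/(@mpolyC N rat).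
rewrite raddf_sum /=; apply: eq_bigr => F _.
rewrite mmapZ rmorphXn rmorphN1 rmorph_prod; congr (_ * _); apply: eq_bigr => r _.
exact/eval_psum_in_zeta/comp_size_bounds.
Qed.

Unset Implicit Arguments.

Theorem theorem3p7 (T : finType) (e : rel T) :
  simple_graph e ->
  (exists (M : nat) (Q : {mpoly rat[M]}), represents_chromsym e Q) /\
  (forall (M : nat) (Q : {mpoly rat[M]}), represents_chromsym e Q ->
     forall k : nat, (num_acyclic_sinks e k)%:R = coef_sum_weight Q k).
Proof.
move=> [e_sym _]; split; first exact: represents_chromsym_exists.
move=> M Q rep k.
by rewrite -coef_weight_poly (weight_poly_represents e_sym rep) coef_sink_poly.
Qed.
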